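(* For every integer $n\ge 1$ and every positive divisor $k$ of $n$, $F_{n,k}=1$.
   Context: Define maps $G,S:\mathbb Z^2\to\mathbb Z^2$ by $G(x,y)=(x+y,y)$ and $S(x,y)=(3x-2y+1,\,2x-y+1)$. Define the array $(F_{n,k})_{n,k\ge 0}$ by $F_{0,0}=1$ and, for $(n,k)\neq(0,0)$, $F_{n,k}$ is the number of finite words $w=w_1w_2\cdots w_m$ ($m\ge 0$) over the alphabet $\{G,S\}$ with $w_1\circ w_2\circ\cdots\circ w_m(1,1)=(n,k)$ (the empty word acts as the identity). Equivalently: start with all entries $0$, set $F_{0,0}=1$ and $F_{1,1}=1$, and thereafter, whenever an entry $F_{n,k}$ with $n\ge 1$ changes its value, increase $F_{n+k,k}$ and $F_{3n+1-2k,\,2n+1-k}$ by $1$. *)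

From Stdlib Require Import ZArith List.
Open Scope Z_scope.

Inductive letter : Type := LG | LS.

Definition act (l : letter) (p : Z * Z) : Z * Z :=
  let (x, y) := p in
  match l with
  | LG => (x + y, y)
  | LS => (3 * x - 2 * y + 1, 2 * x - y + 1)
  end.

Definition eval_word (w : list letter) : Z * Z :=
  fold_right act (1, 1) w.

(* For (n,k) <> (0,0), F_{n,k} is the number of words w with
   eval_word w = (n,k); "F_{n,k} = 1" means there is exactly one such word. *)
Definition F_is_one (n k : Z) : Prop :=
  exists! w : list letter, eval_word w = (n, k).

(* Every value (x, y) of a word satisfies 1 <= y <= x.  On such points G lands in
   the region x >= 2y and S in the region x < 2y, both are injective, and neither
   hits (1, 1); hence the first letter of a word, and then the whole word, is read
   off its value.  Existence is explicit: (k, k) = S^(k-1) (1, 1) and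
   (c k, k) = G^(c-1) (k, k). *)

From Stdlib Require Import ZArith List Lia.
Open Scope Z_scope.

Lemma eval_word_cons (l : letter) (w : list letter) :
  eval_word (l :: w) = act l (eval_word w).
Proof. reflexivity. Qed.

Lemma eval_word_bounds (w : list letter) (x y : Z) :
  eval_word w = (x, y) -> 1 <= y <= x.
Proof.
  revert x y; induction w as [|l w IH]; intros x y Hw.
  - apply pair_equal_spec in Hw; lia.
  - rewrite eval_word_cons in Hw.
    destruct (eval_word w) as [x0 y0].
    specialize (IH x0 y0 eq_refl).
    destruct l; cbn [act] in Hw; apply pair_equal_spec in Hw; lia.
Qed.

Lemma act_inj (l l' : letter) (x y x' y' : Z) :
  1 <= y <= x -> 1 <= y' <= x' ->
  act l (x, y) = act l' (x', y') -> l = l' /\ (x, y) = (x', y').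
Proof.
  intros Hp Hp' Heq.
  destruct l, l'; cbn [act] in Heq; apply pair_equal_spec in Heq; split; try easy; f_equal; lia.
Qed.

Lemma act_neq_one_one (l : letter) (x y : Z) :
  1 <= y <= x -> act l (x, y) <> (1, 1).
Proof. intros Hp Heq; destruct l; cbn [act] in Heq; apply pair_equal_spec in Heq; lia. Qed.

Lemma eval_word_inj (w w' : list letter) :
  eval_word w = eval_word w' -> w = w'.
Proof.
  revert w'; induction w as [|l w IH]; intros [|l' w'] Heq; rewrite ?eval_word_cons in Heq.
  - reflexivity.
  - destruct (eval_word w') as [x' y'] eqn:Ew'.
    destruct (act_neq_one_one l' x' y' (eval_word_bounds w' _ _ Ew')); symmetry; exact Heq.
  - destruct (eval_word w) as [x y] eqn:Ew.
    destruct (act_neq_one_one l x y (eval_word_bounds w _ _ Ew)); exact Heq.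
  - destruct (eval_word w) as [x y] eqn:Ew, (eval_word w') as [x' y'] eqn:Ew'.
    destruct (act_inj l l' x y x' y' (eval_word_bounds w _ _ Ew) (eval_word_bounds w' _ _ Ew') Heq)
      as [-> Hp].
    f_equal; apply IH; congruence.
Qed.

Lemma eval_repeat_LS (m : nat) :
  eval_word (repeat LS m) = (Z.of_nat m + 1, Z.of_nat m + 1).
Proof.
  induction m as [|m IH]; [reflexivity|].
  cbn [repeat]; rewrite eval_word_cons, IH; cbn [act]; f_equal; lia.
Qed.

Lemma eval_repeat_LG_app (m : nat) (w : list letter) (x y : Z) :
  eval_word w = (x, y) -> eval_word (repeat LG m ++ w) = (x + Z.of_nat m * y, y).
Proof.
  intros Hw; induction m as [|m IH].
  - cbn [repeat app]; rewrite Hw; f_equal; lia.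
  - cbn [repeat app]; rewrite eval_word_cons, IH; cbn [act]; f_equal; lia.
Qed.

Theorem proposition7 (n k : Z) (hn : 1 <= n) (hk : 0 < k) (hkn : (k | n)%Z) :
  exists! w : list letter, eval_word w = (n, k).
Proof.
  destruct hkn as [c ->].
  assert (Hc : 1 <= c) by nia.
  assert (Hw : eval_word (repeat LG (Z.to_nat (c - 1)) ++ repeat LS (Z.to_nat (k - 1)))
               = (c * k, k)).
  { rewrite (eval_repeat_LG_app _ _ k k).
    - rewrite Z2Nat.id by lia; f_equal; ring.
    - rewrite eval_repeat_LS, Z2Nat.id by lia; f_equal; ring. }
  eexists; split; [exact Hw|].
  intros w' Hw'; apply eval_word_inj; congruence.
Qed.
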